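(* Let $p$ be a prime, $e\ge1$, $G$ a finite abelian group of order $p^e$, and $q\neq p$ a prime. Let $\psi^q\colon\mathbf{Z}[G]\to\mathbf{Z}[G]$ be the ring homomorphism with $\psi^q(g)=g^q$, and $f_q(t)=\frac{1-t^q}{1-t}$. If $\rho$ is a representation of level $k>0$, then $\psi^q(b_\rho)=f_q(y_\rho)\,b_\rho$; moreover $\psi^q(b_1)=b_1$.
   Context: A representation is a group homomorphism $\rho\colon G\to\mathbf{C}^*$; its level is $k$ if $\rho(G)$ has $p^k$ elements. Write $\omega=\exp(2\pi i/p)$. For $\rho$ of level $k>0$, $b_\rho=\sum_{x\in G,\ \rho(x)=1}x-\sum_{\xi\in G,\ \rho(\xi)=\omega}\xi$ and $y_\rho\in G$ is a fixed element with $\rho(y_\rho)=\omega$; $b_1=\sum_{x\in G}x$. *)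

From mathcomp Require Import all_boot all_algebra all_fingroup.
From mathcomp Require Import complex.
From mathcomp Require Import reals trigo.
Set Implicit Arguments. Unset Strict Implicit. Unset Printing Implicit Defensive.
Import GRing.Theory Num.Theory.
Local Open Scope ring_scope.

(* The group ring Z[G] for a finite group gT (G = the whole of gT),
   represented by coefficient functions gT -> int. *)
Notation grpring gT := {ffun gT -> int}.

Definition gdelta (gT : finGroupType) (g : gT) : grpring gT :=
  [ffun x => ((x == g) : nat)%:Z].

Definition gmul (gT : finGroupType) (a b : grpring gT) : grpring gT :=
  [ffun x => \sum_(g : gT) a g * b (g^-1 * x)%g].

Definition psi (gT : finGroupType) (q : nat) (a : grpring gT) : grpring gT :=
  [ffun x => \sum_(g : gT) a g * gdelta (g ^+ q)%g x].

(* f_q(t) = (1 - t^q)/(1 - t) = 1 + t + ... + t^(q-1), evaluated at y *)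
Definition fq (gT : finGroupType) (q : nat) (y : gT) : grpring gT :=
  \sum_(i < q) gdelta (y ^+ i)%g.

Definition omega (R : realType) (p : nat) : R[i] :=
  ((cos (2 * pi / p%:R))%:C + 'i * (sin (2 * pi / p%:R))%:C)%C.

Definition is_rep (R : realType) (gT : finGroupType) (rho : gT -> R[i]) : Prop :=
  (forall x y : gT, rho (x * y)%g = rho x * rho y) /\ (forall x, rho x != 0).

(* rho has level k : rho(G) has p^k elements (number of distinct values) *)
Definition level (R : realType) (gT : finGroupType) (rho : gT -> R[i]) (p k : nat) : Prop :=
  size (undup [seq rho x | x <- enum gT]) = (p ^ k)%N.

Definition b_rho (R : realType) (gT : finGroupType) (p : nat) (rho : gT -> R[i])
  : grpring gT :=
  \sum_(x : gT | rho x == 1) gdelta x - \sum_(xi : gT | rho xi == omega R p) gdelta xi.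

Definition b_1 (gT : finGroupType) : grpring gT := \sum_(x : gT) gdelta x.

From mathcomp Require Import all_boot all_algebra all_fingroup all_solvable.
From mathcomp Require Import complex.
From mathcomp Require Import reals trigo.
Import GRing.Theory Num.Theory.
Local Open Scope ring_scope.

(* Since q is prime to |G|, the power map x |-> x^q is a permutation of G, so
   psi^q(a)(x) = a(x^(1/q)), and raising to the q-th power is injective on the
   values of a character rho.  Hence psi^q(b_rho)(x) = [rho x = 1] - [rho x = w^q]
   with w = rho(y).  On the other side, (f_q(y) b_rho)(x) is the sum over i < q of
   b_rho(y^-i x) = [rho x = w^i] - [rho x = w^(i+1)], which telescopes to the same
   value.  Finally psi^q(b_1) = b_1 because psi^q permutes G. *)

Lemma sum_gdelta_at (gT : finGroupType) (P : pred gT) (x : gT) :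
  (\sum_(z | P z) gdelta z) x = (P x : nat)%:Z.
Proof.
rewrite sum_ffunE; under eq_bigr => z _ do rewrite ffunE.
case Px: (P x).
  rewrite (bigD1 x) //= eqxx big1 ?addr0 // => z /andP[_ nzx].
  by rewrite eq_sym (negbTE nzx).
by rewrite big1 // => z Pz; case: eqP => // exz; rewrite exz Pz in Px.
Qed.

Lemma b_rho_at (R : realType) (gT : finGroupType) p (rho : gT -> R[i]) x :
  b_rho p rho x = (rho x == 1 : nat)%:Z - (rho x == omega R p : nat)%:Z.
Proof. by rewrite /b_rho !ffunE !sum_gdelta_at. Qed.

Lemma gmul_fq_at (gT : finGroupType) q (y : gT) (b : grpring gT) x :
  gmul (fq q y) b x = \sum_(i < q) b ((y ^+ i)^-1 * x)%g.
Proof.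
rewrite ffunE; under eq_bigr => g _ do rewrite /fq sum_ffunE mulr_suml.
rewrite exchange_big /=; apply: eq_bigr => i _.
rewrite (bigD1 (y ^+ i)%g) //= ffunE eqxx mul1r big1 ?addr0 // => g ngy.
by rewrite ffunE (negbTE ngy) mul0r.
Qed.

Section Representation.

Context {R : realType} {gT : finGroupType} {rho : gT -> R[i]}.
Hypothesis rho_rep : is_rep rho.

Lemma rep1 : rho 1%g = 1.
Proof.
by case: rho_rep => rhoM rho_neq0; apply: (mulIf (rho_neq0 1%g)); rewrite mul1r -rhoM mulg1.
Qed.

Lemma repX (u : gT) n : rho (u ^+ n)%g = rho u ^+ n.
Proof. by elim: n => [|n IHn]; rewrite ?expg0 ?rep1 // expgS rho_rep.1 IHn exprS. Qed.

Lemma rep_mulVg_eq (u x : gT) (c : R[i]) :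
  (rho (u^-1 * x)%g == c) = (rho x == rho u * c).
Proof.
have rhou_neq0 := rho_rep.2 u.
by rewrite -(inj_eq (mulfI rhou_neq0)) -rho_rep.1 mulKVg.
Qed.

Lemma gmul_fq_b_rho_at {p} {y : gT} q : rho y = omega R p -> forall x,
  gmul (fq q y) (b_rho p rho) x =
    (rho x == 1 : nat)%:Z - (rho x == omega R p ^+ q : nat)%:Z.
Proof.
move=> rhoy x; rewrite gmul_fq_at.
under eq_bigr => i _ do
  rewrite b_rho_at !rep_mulVg_eq repX rhoy mulr1 -exprSr.
rewrite -(big_mkord xpredT (fun i => (rho x == omega R p ^+ i : nat)%:Z
   - (rho x == omega R p ^+ i.+1 : nat)%:Z)).
rewrite (telescope_sumr_eq (fun j => - (rho x == omega R p ^+ j : nat)%:Z)) //.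
  by rewrite expr0 opprK addrC.
by move=> j _; rewrite opprK addrC.
Qed.

End Representation.

Section CoprimePower.

Context {gT : finGroupType} {q : nat}.
Hypothesis coprime_q : coprime #|gT| q.

Let m := expg_invn [set: gT] q.

Lemma expgK_root (u : gT) : ((u ^+ q) ^+ m)%g = u.
Proof. by apply: expgK; rewrite ?cardsT ?inE. Qed.

Lemma expg_rootK (u : gT) : ((u ^+ m) ^+ q)%g = u.
Proof. by rewrite expgnAC expgK_root. Qed.

Lemma psi_at (a : grpring gT) (x : gT) : psi q a x = a (x ^+ m)%g.
Proof.
rewrite ffunE (bigD1 (x ^+ m)%g) //= ffunE expg_rootK eqxx mulr1.
rewrite big1 ?addr0 // => g ngx; rewrite ffunE; case: eqP; rewrite ?mulr0 // => xE.
by rewrite xE expgK_root eqxx in ngx.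
Qed.

Lemma rep_root_eq (R : realType) (rho : gT -> R[i]) (x w : gT) : is_rep rho ->
  (rho (x ^+ m)%g == rho w) = (rho x == rho (w ^+ q)%g).
Proof.
move=> rho_rep; apply/eqP/eqP => [rhoE|rhoE].
  by rewrite -(expg_rootK x) (repX rho_rep (x ^+ m)%g) rhoE -(repX rho_rep).
by rewrite -(expgK_root w) (repX rho_rep (w ^+ q)%g) -rhoE -(repX rho_rep).
Qed.

Lemma psi_b_rho_at {R : realType} {p} {rho : gT -> R[i]} {y : gT} :
  is_rep rho -> rho y = omega R p -> forall x,
  psi q (b_rho p rho) x =
    (rho x == 1 : nat)%:Z - (rho x == omega R p ^+ q : nat)%:Z.
Proof.
move=> rho_rep rhoy x; rewrite psi_at b_rho_at -(rep1 rho_rep) -rhoy.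
by rewrite !rep_root_eq // expg1n !(repX rho_rep) rhoy (rep1 rho_rep).
Qed.

End CoprimePower.

Theorem mainTheorem7 (R : realType) (gT : finGroupType) (p e q : nat) :
  prime p -> (1 <= e)%N -> abelian [set: gT] -> #|gT| = (p ^ e)%N ->
  prime q -> q != p ->
  (forall (rho : gT -> R[i]) (k : nat) (y : gT),
      is_rep rho -> level rho p k -> (0 < k)%N -> rho y = omega R p ->
      psi q (b_rho p rho) = gmul (fq q y) (b_rho p rho))
  /\ psi q (b_1 gT) = b_1 gT.
Proof.
move=> p_pr _ _ cardG q_pr q_neq_p.
have coprime_q : coprime #|gT| q.
  by rewrite cardG coprimeXl // prime_coprime // dvdn_prime2 // eq_sym.
split=> [rho k y rho_rep _ _ rhoy|].
  apply/ffunP => x.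
  by rewrite (psi_b_rho_at coprime_q rho_rep rhoy) (gmul_fq_b_rho_at rho_rep q rhoy).
by apply/ffunP => x; rewrite (psi_at coprime_q) /b_1 !sum_gdelta_at.
Qed.
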